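(* Let $\mathbb{A}$ be a non-empty set and $x\in\mathbb{A}^\omega$ a word that is not purely periodic (i.e. not of the form $u^\omega$ with $u\in\mathbb{A}^+$). Define $\varphi:\mathbb{A}^+\to\{0,1\}$ by $\varphi(u)=0$ if $u$ is a prefix of $x$ and $\varphi(u)=1$ otherwise. Then $x$ admits no $\varphi$-sequentially monochromatic factorization.
   Context: A factorization $x=V_0V_1V_2\cdots$ with all $V_i\in\mathbb{A}^+$ is $\varphi$-sequentially monochromatic if there is a color $c$ with $\varphi(V_iV_{i+1}\cdots V_{i+j})=c$ for all $i,j\ge0$. *)

From mathcomp Require Import all_boot.
From Stdlib Require Import ClassicalEpsilon.
Set Implicit Arguments. Unset Strict Implicit. Unset Printing Implicit Defensive.

(* Infinite words over an alphabet A are functions nat -> A;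
   finite words are seq A, with A^+ = nonempty seqs.
   The default element used for nth is x 0 (irrelevant since indices are in range). *)

Definition is_prefix (A : Type) (x : nat -> A) (u : seq A) : Prop :=
  forall i, i < size u -> nth (x 0) u i = x i.

Definition purely_periodic (A : Type) (x : nat -> A) : Prop :=
  exists u : seq A, 0 < size u /\ forall n, x n = nth (x 0) u (n %% size u).

Definition phi (A : Type) (x : nat -> A) (u : seq A) : nat :=
  if excluded_middle_informative (is_prefix x u) then 0 else 1.

Definition start (A : Type) (V : nat -> seq A) (n : nat) : nat :=
  \sum_(k < n) size (V k).

Definition is_factorization (A : Type) (x : nat -> A) (V : nat -> seq A) : Prop :=
  (forall n, 0 < size (V n)) /\
  (forall n i, i < size (V n) -> nth (x 0) (V n) i = x (start V n + i)).

(* V_i V_{i+1} ... V_{i+j} *)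
Definition block (A : Type) (V : nat -> seq A) (i j : nat) : seq A :=
  flatten [seq V k | k <- iota i j.+1].

Definition seq_monochromatic (A : Type) (col : seq A -> nat) (V : nat -> seq A) : Prop :=
  exists c : nat, forall i j, col (block V i j) = c.

(* A monochromatic factorization must have colour phi(V_0) = 0, since V_0 is a
   prefix of x; so every block V_1 ... V_(1+j) is a prefix of x as well.  These
   blocks spell out x shifted by |V_0|, hence x has period |V_0| and is purely
   periodic. *)

From mathcomp Require Import all_boot.
From Stdlib Require Import ClassicalEpsilon Lia.
From mathcomp Require Import zify.

Set Implicit Arguments.
Unset Strict Implicit.

Lemma phi_eq0 (A : Type) (x : nat -> A) (u : seq A) : phi x u = 0 <-> is_prefix x u.
Proof. by rewrite /phi; case: excluded_middle_informative. Qed.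

Lemma periodic_purely_periodic (A : Type) (x : nat -> A) (p : nat) :
  0 < p -> (forall m, x (p + m) = x m) -> purely_periodic x.
Proof.
move=> p_gt0 per; exists (mkseq x p); rewrite size_mkseq; split=> // n.
have per_mul k r : x (k * p + r) = x r.
  by elim: k => // k IHk; rewrite mulSn -addnA per.
by rewrite nth_mkseq ?ltn_pmod // {1}(divn_eq n p) per_mul.
Qed.

Section Blocks.
Variables (A : Type) (V : nat -> seq A).

Lemma startS i : start V i.+1 = start V i + size (V i).
Proof. by rewrite /start big_ord_recr. Qed.

Lemma start0 : start V 0 = 0.
Proof. by rewrite /start big_ord0. Qed.

Lemma block0 i : block V i 0 = V i.
Proof. by rewrite /block /= cats0. Qed.

Lemma blockS i j : block V i j.+1 = V i ++ block V i.+1 j.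
Proof. by []. Qed.

Lemma size_block_gt (V_gt0 : forall n, 0 < size (V n)) j i :
  j < size (block V i j).
Proof.
elim: j i => [|j IHj] i; first by rewrite block0.
by rewrite blockS size_cat; have := IHj i.+1; have := V_gt0 i; lia.
Qed.

Lemma nth_block (x : nat -> A) : is_factorization x V ->
  forall j i m, m < size (block V i j) ->
  nth (x 0) (block V i j) m = x (start V i + m).
Proof.
move=> [_ facV]; elim=> [|j IHj] i m; first by rewrite block0; exact: facV.
rewrite blockS size_cat nth_cat => lt_m; case: ltnP => [|le_m]; first exact: facV.
by rewrite IHj ?startS; [congr x | ]; lia.
Qed.

End Blocks.

Lemma monochromatic_blocks_prefix (A : Type) (x : nat -> A) (V : nat -> seq A) :
  is_factorization x V -> seq_monochromatic (phi x) V ->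
  forall i j, is_prefix x (block V i j).
Proof.
move=> facV [c mono] i j; apply/phi_eq0; rewrite mono -(mono 0 0); apply/phi_eq0.
by move=> m lt_m; rewrite (nth_block facV) // start0.
Qed.

Lemma prefix_blocks_periodic (A : Type) (x : nat -> A) (V : nat -> seq A) :
  is_factorization x V -> (forall j, is_prefix x (block V 1 j)) ->
  forall m, x (size (V 0) + m) = x m.
Proof.
move=> facV pre m.
have lt_m : m < size (block V 1 m) by apply: size_block_gt; case: facV.
by rewrite -[in RHS](pre m m lt_m) (nth_block facV) // startS start0.
Qed.

Theorem mainTheorem12 (A : Type) (x : nat -> A) :
  ~ purely_periodic x ->
  ~ exists V : nat -> seq A, is_factorization x V /\ seq_monochromatic (phi x) V.
Proof.
move=> aper [V [facV monoV]]; apply: aper.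
apply: (@periodic_purely_periodic _ _ (size (V 0))); first by case: facV.
apply: (prefix_blocks_periodic facV) => j.
exact: monochromatic_blocks_prefix.
Qed.
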